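(* For every $n\ge1$ and every essential lattice congruence $R\in\mathcal C_n^*$, the minimum degree of the quotient graph $Q_R$ is exactly $n-1$.
   Context: $S_n$ is the set of permutations of $[n]$ with the weak order (inclusion of inversion sets); a lattice congruence is an equivalence relation compatible with joins and meets. Lattice congruences $R$ correspond bijectively to downsets $F_R$ of the forcing order on fences, where a cover edge joins $R$-equivalent permutations iff it lies in a fence of $F_R$. Fences. For $1\le a<b\le n$ and $L\subseteq\{a+1,\dots,b-1\}$, the fence $f(a,b,L)$ is the set of cover edges that swap adjacent entries $a,b$, with the values of $L$ to the left of $a,b$ and the other values between $a$ and $b$ to the right. Forcing order: $f(a,b,L)\prec f(c,d,M)$ iff $a\le c<d\le b$, $(a,b)\ne(c,d)$, $M=L\cap\{c+1,\dots,d-1\}$. $R$ is essential if $F_R$ contains no $f(a,a+1,\emptyset)$. $Q_R$ is the undirected cover graph of the lattice quotient $S_n/R$. *)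

From mathcomp Require Import all_boot all_fingroup.
Set Implicit Arguments. Unset Strict Implicit. Unset Printing Implicit Defensive.

(* Conventions: values and positions are 0..n-1 (the paper uses 1..n).
   A permutation p : 'S_n is read as the word p 0, p 1, ..., p (n-1):
   position k carries value p k; the position of value c is (p^-1) c. *)

Section Weak.
Variable n : nat.
Implicit Types p q x y z w : 'S_n.

Definition inv_set p : {set 'I_n * 'I_n} :=
  [set ab : 'I_n * 'I_n | (ab.1 < ab.2) && ((p^-1)%g ab.2 < (p^-1)%g ab.1)].

Definition weak_le p q : bool := inv_set p \subset inv_set q.

Definition is_join x y z : bool :=
  [&& weak_le x z, weak_le y z &
      [forall w, (weak_le x w && weak_le y w) ==> weak_le z w]].
Definition is_meet x y z : bool :=
  [&& weak_le z x, weak_le z y &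
      [forall w, (weak_le w x && weak_le w y) ==> weak_le w z]].

Definition lattice_congruence (R : rel 'S_n) : Prop :=
  [/\ reflexive R, symmetric R, transitive R,
      (forall x x' y y' z z', R x x' -> R y y' ->
          is_join x y z -> is_join x' y' z' -> R z z') &
      (forall x x' y y' z z', R x x' -> R y y' ->
          is_meet x y z -> is_meet x' y' z' -> R z z')].

(* (p, q) is a cover edge of the weak order (p below q) swapping the adjacent
   entries p i < p j at positions i, j = i+1; it belongs to the fence
   f(a,b,L) iff p i = a, p j = b, and every value c with a<c<b is to the left
   of the pair iff c \in L. *)
Definition in_fence (a b : 'I_n) (L : {set 'I_n}) p q : Prop :=
  exists i j : 'I_n,
    [/\ val j = (val i).+1, p i = a, p j = b,
        (forall k, q k = p (tperm i j k)) &
        (forall c : 'I_n, a < c < b -> (c \in L) = ((p^-1)%g c < i))].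

(* f(a,b,L) belongs to F_R : its edges are R-contracted (by the
   correspondence, some edge of a fence is contracted iff all are). *)
Definition fence_in_FR (R : rel 'S_n) (a b : 'I_n) (L : {set 'I_n}) : Prop :=
  exists p q, in_fence a b L p q /\ R p q.

Definition essential (R : rel 'S_n) : Prop :=
  forall a b : 'I_n, val b = (val a).+1 -> ~ fence_in_FR R a b set0.

Definition cls (R : rel 'S_n) p : {set 'S_n} := [set q | R p q].
Definition is_class (R : rel 'S_n) (X : {set 'S_n}) : bool :=
  [exists p, X == cls R p].
Definition q_le (X Y : {set 'S_n}) : bool :=
  [exists x in X, exists y in Y, weak_le x y].
Definition q_lt (X Y : {set 'S_n}) : bool := (X != Y) && q_le X Y.
Definition q_cover (R : rel 'S_n) (X Y : {set 'S_n}) : bool :=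
  q_lt X Y && ~~ [exists Z, [&& is_class R Z, q_lt X Z & q_lt Z Y]].
Definition q_adj (R : rel 'S_n) (X Y : {set 'S_n}) : bool :=
  q_cover R X Y || q_cover R Y X.
Definition q_deg (R : rel 'S_n) (X : {set 'S_n}) : nat :=
  #|[set Y | is_class R Y && q_adj R X Y]|.

End Weak.

From mathcomp Require Import all_boot all_fingroup.
From mathcomp Require Import zify.
Set Implicit Arguments. Unset Strict Implicit. Unset Printing Implicit Defensive.

(* An R-class X is an interval [m, M] of the weak order.  Each ascent of M and
   each descent of m gives a cover of the weak order leaving X, and these
   covers reach pairwise distinct classes adjacent to X.  Label each of them by
   the two values it exchanges: the labels form a graph on the n values that
   crosses every nontrivial cut S, hence has at least n - 1 edges.  Indeed, an
   element of X minimizing the number of pairs (u, v) with u outside S placed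
   before v in S either has such a pair at adjacent positions, whose swap then
   leaves X, or places S first; a swap of adjacent entries leaving X reappears
   at M or m with the same two values.  If some element of X places S first and
   some places S last, then two consecutive values a, a+1 separated by S are
   inverted in one of them but not in the other, which essentiality forbids.
   Conversely, essentiality makes the identity alone in its class, whose only
   neighbours are the classes of the n - 1 simple transpositions. *)

Section Words.
Variable n : nat.
Implicit Types x y z : 'S_n.
Implicit Types a b i j k l u v : 'I_n.

Definition pos x v : nat := (x^-1)%g v.
Definition before x u v := pos x u < pos x v.
Definition inverted x a b := (a < b) && before x b a.

Lemma in_inv_set x a b : ((a, b) \in inv_set x) = inverted x a b.
Proof. by rewrite inE. Qed.

Lemma weak_leP x y :
  reflect (forall a b, inverted x a b -> inverted y a b) (weak_le x y).
Proof.
apply: (iffP subsetP) => H; first by move=> a b; have := H (a, b); rewrite !in_inv_set.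
by move=> [a b]; rewrite !in_inv_set; exact: H.
Qed.

Lemma weak_le_refl x : weak_le x x.
Proof. exact: subxx. Qed.

Lemma weak_le_trans x y z : weak_le x y -> weak_le y z -> weak_le x z.
Proof. exact: subset_trans. Qed.

Lemma pos_inj x : injective (pos x).
Proof. by move=> u v /val_inj /perm_inj. Qed.

Lemma before_total x u v : u != v -> before x u v || before x v u.
Proof.
move=> uv; rewrite /before; case: ltngtP => // /pos_inj E.
by rewrite E eqxx in uv.
Qed.

Lemma before_asym x u v : before x u v -> before x v u = false.
Proof. by rewrite /before => /ltnW; rewrite leqNgt => /negbTE. Qed.

Lemma before_trans x u v w : before x u v -> before x v w -> before x u w.
Proof. exact: ltn_trans. Qed.

Lemma invertedE x a b : a < b -> inverted x a b = before x b a.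
Proof. by rewrite /inverted => ->. Qed.

Lemma before_inverted x u v : u != v ->
  before x u v = if u < v then ~~ inverted x u v else inverted x v u.
Proof.
move=> uv; rewrite /inverted; case: ltngtP => [lt|gt|/val_inj E] /=.
- by case/orP: (before_total x uv) => h; rewrite h // before_asym.
- by [].
- by rewrite E eqxx in uv.
Qed.

Lemma adjacent_neq x i j : val j = i.+1 -> x i != x j.
Proof.
by move=> ij; apply/eqP => /perm_inj E; move: ij; rewrite E => /n_Sn.
Qed.

Lemma before_adjacent x i j : val j = i.+1 -> before x (x i) (x j).
Proof. by move=> ij; rewrite /before /pos !permK ij. Qed.

Lemma inverted_ascent x k l : val l = k.+1 -> inverted x (x k) (x l) = false.
Proof. by move=> kl; rewrite /inverted before_asym ?andbF // before_adjacent. Qed.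

Lemma inverted_descent x k l : val l = k.+1 -> x l < x k -> inverted x (x l) (x k).
Proof. by move=> kl lt; rewrite invertedE // before_adjacent. Qed.

(* the positions in y of x 0, x 1, ..., x (n-1) increase, so they are 0, 1, ... *)
Lemma perm_adjacent_eq x y :
  (forall i j, val j = i.+1 -> before y (x i) (x j)) -> x = y.
Proof.
move=> H.
have pos_ge m k : k = m :> nat -> m <= pos y (x k).
  elim: m k => [|m IH] k // Hk.
  have mn : m < n by have := ltn_ord k; lia.
  by have := IH (Ordinal mn) erefl; have := H (Ordinal mn) k Hk; rewrite /before; lia.
have pos_le m k : k + m = n.-1 -> pos y (x k) <= k.
  elim: m k => [|m IH] k Hk.
    by have := ltn_ord ((y^-1)%g (x k)); rewrite /pos; lia.
  have kn : k.+1 < n by have := ltn_ord k; lia.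
  have := IH (Ordinal kn) (etrans (addSnnS _ _) Hk).
  by have := H k (Ordinal kn) erefl; rewrite /before /=; lia.
apply/permP => k; apply: (@perm_inj _ (y^-1)%g); rewrite permK; apply: val_inj.
apply/eqP; rewrite eqn_leq (pos_le (n.-1 - k)) ?(pos_ge k) //; have := ltn_ord k; lia.
Qed.

Lemma inverted_inj x y : (forall a b, inverted x a b = inverted y a b) -> x = y.
Proof.
move=> H; apply: perm_adjacent_eq => i j ij.
have nij := adjacent_neq x ij.
rewrite before_inverted // -!H -before_inverted //; exact: before_adjacent.
Qed.

Lemma weak_le_anti x y : weak_le x y -> weak_le y x -> x = y.
Proof.
move=> /weak_leP xy /weak_leP yx; apply: inverted_inj => a b.
by apply/idP/idP => [/xy|/yx].
Qed.

End Words.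

Section Biclosed.
Variable n : nat.
Implicit Types x y z : 'S_n.
Implicit Types A B C : rel 'I_n.
Implicit Types a b c u v w : 'I_n.

(* Inversion sets of permutations are exactly the biclosed relations. *)
Definition biclosed A :=
  [/\ forall a b : 'I_n, A a b -> a < b,
      forall a b c : 'I_n, A a b -> A b c -> A a c &
      forall a b c : 'I_n, a < b -> b < c -> A a c -> A a b || A b c].

Lemma inverted_biclosed x : biclosed (inverted x).
Proof.
split=> [a b /andP[] //|a b c /andP[ab ba] /andP[bc cb]|a b c ab bc /andP[ac ca]].
  by rewrite /inverted (ltn_trans ab bc) (before_trans cb ba).
rewrite /inverted ab bc /=.
have /(before_total x)/orP[-> //|ab'] : b != a by rewrite neq_ltn ab orbT.
by rewrite (before_trans ca ab') orbT.
Qed.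

Definition compl_rel A : rel 'I_n := fun a b => (a < b) && ~~ A a b.

Lemma compl_rel_biclosed A : biclosed A -> biclosed (compl_rel A).
Proof.
case=> _ Atr Aco; split=> [a b /andP[] //|a b c /andP[ab nab] /andP[bc nbc]|].
  rewrite /compl_rel (ltn_trans ab bc).
  by apply/negP => /(Aco _ _ _ ab bc); rewrite (negbTE nab) (negbTE nbc).
move=> a b c ab bc /andP[ac nac]; rewrite /compl_rel ab bc -negb_and.
by apply: contra nac => /andP[/Atr]; apply.
Qed.

(* the order "u before v" encoded by a biclosed relation seen as inversions *)
Definition rel_before A (u v : 'I_n) : bool :=
  if u < v then ~~ A u v else if v < u then A v u else false.

Lemma rel_before_irr A u : rel_before A u u = false.
Proof. by rewrite /rel_before ltnn. Qed.

Lemma rel_before_total A u v : u != v -> rel_before A u v || rel_before A v u.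
Proof.
rewrite /rel_before neq_ltn; case: ltngtP => //= [_|_] _.
  by case: (A u v).
by case: (A v u).
Qed.

Lemma rel_before_asym A u v : rel_before A u v -> rel_before A v u = false.
Proof.
by rewrite /rel_before; case: ltngtP => //= _; [move/negbTE | move->].
Qed.

Lemma rel_before_trans A u v w : biclosed A ->
  rel_before A u v -> rel_before A v w -> rel_before A u w.
Proof.
move=> [_ Atr Aco].
have [->|uw] := eqVneq u w; first by move=> h1 h2; rewrite (rel_before_asym h1) in h2.
rewrite /rel_before; case: (ltngtP u v) => [uv|vu|//] huv.
- case: (ltngtP v w) => [vw|wv|//] hvw.
  + rewrite (ltn_trans uv vw).
    by apply/negP => /(Aco _ _ _ uv vw); rewrite (negbTE huv) (negbTE hvw).
  + case: (ltngtP u w) => [_|wu|/val_inj E]; last by rewrite E eqxx in uw.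
      by apply: contra huv => /Atr; apply.
    by have := Aco _ _ _ wu uv hvw; rewrite (negbTE huv) orbF.
- case: (ltngtP v w) => [vw|wv|//] hvw.
  + case: (ltngtP u w) => [_|wu|/val_inj E]; last by rewrite E eqxx in uw.
      by apply: contra hvw => /(Atr _ _ _ huv).
    by have := Aco _ _ _ vw wu huv; rewrite (negbTE hvw).
  + have wu := ltn_trans wv vu.
    by rewrite ltnNge (ltnW wu) /= wu (Atr _ _ _ hvw huv).
Qed.

(* the position of v in the permutation realizing A *)
Definition rel_rank A (v : 'I_n) : nat := #|[set u | rel_before A u v]|.

Lemma rel_rank_lt A v : rel_rank A v < n.
Proof.
rewrite /rel_rank -[X in _ < X](card_ord n) -cardsT; apply: proper_card.
rewrite properT; apply/negP => /eqP E.
have : v \in [set u | rel_before A u v] by rewrite E inE.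
by rewrite inE rel_before_irr.
Qed.

Lemma rel_rank_mono A u v : biclosed A -> rel_before A u v -> rel_rank A u < rel_rank A v.
Proof.
move=> bA uv; apply: proper_card; apply/properP; split.
  by apply/subsetP => w; rewrite !inE => /rel_before_trans; apply.
by exists u; rewrite !inE // rel_before_irr.
Qed.

Lemma biclosed_realizable A : biclosed A -> {x : 'S_n | inverted x =2 A}.
Proof.
move=> bA.
have rank_inj : injective (fun v => Ordinal (rel_rank_lt A v)).
  move=> u v /(congr1 val) /= E; apply/eqP; apply/negPn/negP => /(rel_before_total A).
  by case/orP=> /(rel_rank_mono bA); rewrite E ltnn.
exists (perm rank_inj)^-1%g => a b.
have posE v : pos (perm rank_inj)^-1%g v = rel_rank A v by rewrite /pos invgK permE.
have [Alt _ _] := bA.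
case: (ltnP a b) => [ab|ba]; last first.
  by rewrite /inverted ltnNge ba; apply/esym/negP => /Alt; rewrite ltnNge ba.
rewrite invertedE // /before !posE.
have nab : a != b by rewrite neq_ltn ab.
case: (boolP (rel_before A b a)) => [hba|nba].
  by rewrite (rel_rank_mono bA hba); move: hba; rewrite /rel_before ltnNge (ltnW ab) /= ab.
have hab : rel_before A a b by move: (rel_before_total A nab); rewrite (negbTE nba) orbF.
rewrite ltnNge (ltnW (rel_rank_mono bA hab)) /=.
by move: hab; rewrite /rel_before ab => /negbTE.
Qed.

(* the inversion set of the join; dually, the non-inversions of the meet are
   the closure of the non-inversions *)
Definition union_closure A B : rel 'I_n :=
  fun a b => (a < b) && connect (relU A B) a b.

Lemma connect_transitive C a b :
  (forall a b c, C a b -> C b c -> C a c) -> connect C a b -> a = b \/ C a b.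
Proof.
move=> Ctr /connectP[s]; elim: s a => [|c s IH] a /=; first by left.
case/andP=> ac /IH /[apply] -[<-|cb]; right => //; exact: Ctr ac cb.
Qed.

Lemma union_closure_least A B C :
  (forall a b c, C a b -> C b c -> C a c) ->
  subrel A C -> subrel B C -> subrel (union_closure A B) C.
Proof.
move=> Ctr AC BC a b /andP[ab /(connect_sub (e' := C))].
case/(_ _)/(connect_transitive Ctr) => [u v /orP[/AC|/BC] /connect1 //|E|//].
by rewrite E ltnn in ab.
Qed.

Lemma union_closure_path A B : biclosed A -> biclosed B ->
  forall s a b, path (relU A B) a s -> a < b -> b < last a s ->
  connect (relU A B) a b || connect (relU A B) b (last a s).
Proof.
move=> [_ _ Aco] [_ _ Bco]; elim=> [|y s IH] a b /=.
  by move=> _ ab /(ltn_trans ab); rewrite ltnn.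
case/andP=> ay py ab bl.
have yl : connect (relU A B) y (last y s) by apply/connectP; exists s.
case: (ltngtP b y) => [lt_by|yb|/val_inj ->]; last by rewrite yl orbT.
- have [->//|by'] : connect (relU A B) a b \/ connect (relU A B) b y.
    case/orP: ay => [/(Aco _ _ _ ab lt_by)|/(Bco _ _ _ ab lt_by)] /orP[] h;
      [left|right|left|right]; by apply: connect1; rewrite /= h ?orbT.
  by rewrite (connect_trans by' yl) orbT.
- case/orP: (IH y b py yb bl) => [yb'|->]; last by rewrite orbT.
  have ay' : connect (relU A B) a y by exact: connect1.
  by rewrite (connect_trans ay' yb').
Qed.

Lemma union_closure_biclosed A B : biclosed A -> biclosed B -> biclosed (union_closure A B).
Proof.
move=> bA bB; split=> [a b /andP[] //|a b c /andP[ab hab] /andP[bc hbc]|].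
  by rewrite /union_closure (ltn_trans ab bc) (connect_trans hab hbc).
move=> a b c ab bc /andP[ac /connectP[s ps cE]].
by have := union_closure_path bA bB ps ab; rewrite -cE /union_closure ab bc => ->.
Qed.

Definition perm_join x y : 'S_n := sval (biclosed_realizable
  (union_closure_biclosed (inverted_biclosed x) (inverted_biclosed y))).
Definition perm_meet x y : 'S_n := sval (biclosed_realizable
  (compl_rel_biclosed (union_closure_biclosed
    (compl_rel_biclosed (inverted_biclosed x)) (compl_rel_biclosed (inverted_biclosed y))))).

Lemma inverted_join x y : inverted (perm_join x y) =2 union_closure (inverted x) (inverted y).
Proof. exact: svalP (biclosed_realizable _). Qed.

Lemma inverted_meet x y : inverted (perm_meet x y) =2
  compl_rel (union_closure (compl_rel (inverted x)) (compl_rel (inverted y))).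
Proof. exact: svalP (biclosed_realizable _). Qed.

Lemma perm_joinP x y : is_join x y (perm_join x y).
Proof.
apply/and3P; split.
- by apply/weak_leP => a b h; rewrite inverted_join /union_closure (andP h).1 connect1 //= h.
- by apply/weak_leP => a b h; rewrite inverted_join /union_closure (andP h).1 connect1 //= h orbT.
apply/forallP => w; apply/implyP => /andP[/weak_leP xw /weak_leP yw].
apply/weak_leP => a b; rewrite inverted_join; apply: (union_closure_least _ xw yw).
by have [] := inverted_biclosed w.
Qed.

Lemma perm_meetP x y : is_meet x y (perm_meet x y).
Proof.
apply/and3P; split.
- apply/weak_leP => a b; rewrite inverted_meet => /andP[ab]; apply: contraNT => h.
  by rewrite /union_closure ab connect1 //= /compl_rel ab h.
- apply/weak_leP => a b; rewrite inverted_meet => /andP[ab]; apply: contraNT => h.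
  by rewrite /union_closure ab connect1 //= /compl_rel ab h orbT.
apply/forallP => w; apply/implyP => /andP[/weak_leP wx /weak_leP wy].
apply/weak_leP => a b wab; rewrite inverted_meet /compl_rel (andP wab).1 /=.
have sub z : (forall c d, inverted w c d -> inverted z c d) ->
    subrel (compl_rel (inverted z)) (compl_rel (inverted w)).
  by move=> wz c d /andP[cd]; rewrite /compl_rel cd; apply: contra => /wz.
have [_ ctr _] := compl_rel_biclosed (inverted_biclosed w).
by apply/negP => /(union_closure_least ctr (sub _ wx) (sub _ wy)) /andP[_]; rewrite wab.
Qed.

End Biclosed.

Section Swaps.
Variable n : nat.
Implicit Types x y z : 'S_n.
Implicit Types a b c d i j k l u v : 'I_n.

Definition swap i j x : 'S_n := (tperm i j * x)%g.

Lemma swapE i j x k : swap i j x k = x (tperm i j k).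
Proof. by rewrite permM. Qed.

Lemma swapK i j : involutive (swap i j).
Proof. by move=> x; rewrite /swap mulgA tperm2 mul1g. Qed.

Lemma swap_l i j x : swap i j x i = x j.
Proof. by rewrite swapE tpermL. Qed.

Lemma swap_r i j x : swap i j x j = x i.
Proof. by rewrite swapE tpermR. Qed.

Lemma pos_swap i j x v : pos (swap i j x) v = tperm i j ((x^-1)%g v).
Proof. by rewrite /pos /swap invMg tpermV permM. Qed.

Lemma tperm_adjacent_lt i j k l : val j = i.+1 ->
  ~ (k = i /\ l = j) -> ~ (k = j /\ l = i) ->
  (tperm i j k < tperm i j l) = (k < l).
Proof.
move=> ij ki kj; have {}ij : (j : nat) = i.+1 by [].
have neq_val (k' i' : 'I_n) : k' <> i' -> (k' : nat) <> i' by move=> H /val_inj.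
case: tpermP => [Ek|Ek|k1 k2]; case: tpermP => [El|El|l1 l2]; subst.
all: try (by exfalso; auto).
all: try (move: (neq_val _ _ k1) (neq_val _ _ k2) => {}k1 {}k2).
all: try (move: (neq_val _ _ l1) (neq_val _ _ l2) => {}l1 {}l2).
all: apply/idP/idP; lia.
Qed.

Lemma before_swap_other i j x u v : val j = i.+1 ->
  ~ (u = x i /\ v = x j) -> ~ (u = x j /\ v = x i) ->
  before (swap i j x) u v = before x u v.
Proof.
move=> ij uv vu; rewrite /before !pos_swap tperm_adjacent_lt //.
- by case=> Eu Ev; apply: uv; rewrite -Eu -Ev !permKV.
- by case=> Eu Ev; apply: vu; rewrite -Eu -Ev !permKV.
Qed.

Lemma before_swap i j x : val j = i.+1 -> before (swap i j x) (x j) (x i).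
Proof. by move=> ij; rewrite /before !pos_swap /pos !permK tpermL tpermR ij. Qed.

Lemma inverted_swap i j x a b : val j = i.+1 ->
  inverted (swap i j x) a b =
  if ((a == x i) && (b == x j)) || ((a == x j) && (b == x i))
  then (a < b) && ~~ inverted x a b else inverted x a b.
Proof.
move=> ij; case: ifP => [|/negbT]; last first.
  rewrite negb_or !negb_and => /andP[h1 h2]; rewrite /inverted before_swap_other //.
  + by case=> Eb Ea; move: h2; rewrite Ea Eb !eqxx.
  + by case=> Eb Ea; move: h1; rewrite Ea Eb !eqxx.
case/orP => /andP[/eqP-> /eqP->]; rewrite /inverted.
  by rewrite before_swap // (before_asym (before_adjacent x ij)) andbF andbT.
by rewrite (before_asym (before_swap x ij)) before_adjacent // andbT andbN andbF.
Qed.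

Section Ascent.
Variables (i j : 'I_n) (x : 'S_n).
Hypotheses (ij : val j = i.+1) (lt_ij : x i < x j).

Lemma inverted_swap_up a b :
  inverted (swap i j x) a b = inverted x a b || ((a == x i) && (b == x j)).
Proof.
rewrite inverted_swap //; have nij := adjacent_neq x ij.
case: ifP => [/orP[]/andP[/eqP-> /eqP->]|/negbT].
- by rewrite !eqxx lt_ij inverted_ascent.
- by rewrite /inverted ltnNge (ltnW lt_ij) eq_sym (negbTE nij).
- by rewrite negb_or => /andP[/negbTE -> _]; rewrite orbF.
Qed.

Lemma swap_up_ge : weak_le x (swap i j x).
Proof. by apply/weak_leP => a b h; rewrite inverted_swap_up h. Qed.

Lemma swap_up_neq : x != swap i j x.
Proof.
apply: contraTneq isT => E.
by have := inverted_swap_up (x i) (x j); rewrite -E inverted_ascent // !eqxx.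
Qed.

Lemma swap_up_le y : weak_le x y -> inverted y (x i) (x j) -> weak_le (swap i j x) y.
Proof.
move=> /weak_leP xy yij; apply/weak_leP => a b; rewrite inverted_swap_up.
by case/orP => [/xy|/andP[/eqP-> /eqP->]].
Qed.

Lemma swap_up_between y : weak_le x y -> weak_le y (swap i j x) ->
  y = x \/ y = swap i j x.
Proof.
move=> xy /weak_leP yx'; case: (boolP (inverted y (x i) (x j))) => hy.
  by right; apply: weak_le_anti; [exact/weak_leP | exact: swap_up_le].
left; apply: weak_le_anti => //; apply/weak_leP => a b ya.
have := yx' _ _ ya; rewrite inverted_swap_up => /orP[//|/andP[/eqP Ea /eqP Eb]].
by move: hy; rewrite -Ea -Eb ya.
Qed.

Lemma meet_swap_up y : weak_le x y -> ~~ inverted y (x i) (x j) ->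
  is_meet y (swap i j x) x.
Proof.
move=> xy nyij; apply/and3P; split=> //; first exact: swap_up_ge.
apply/forallP => w; apply/implyP => /andP[/weak_leP wy /weak_leP wx'].
apply/weak_leP => a b wab; have := wx' _ _ wab; rewrite inverted_swap_up.
case/orP=> // /andP[/eqP Ea /eqP Eb].
by move: (wy _ _ wab); rewrite Ea Eb (negbTE nyij).
Qed.

End Ascent.

Section Descent.
Variables (i j : 'I_n) (x : 'S_n).
Hypotheses (ij : val j = i.+1) (lt_ji : x j < x i).

Lemma inverted_swap_down a b :
  inverted (swap i j x) a b = inverted x a b && ~~ ((a == x j) && (b == x i)).
Proof.
rewrite inverted_swap //; have nij := adjacent_neq x ij.
case: ifP => [/orP[]/andP[/eqP-> /eqP->]|/negbT].
- by rewrite /inverted ltnNge (ltnW lt_ji).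
- by rewrite !eqxx /inverted lt_ji before_adjacent.
- by rewrite negb_or => /andP[_ /negbTE ->]; rewrite andbT.
Qed.

Lemma swap_down_le : weak_le (swap i j x) x.
Proof. by apply/weak_leP => a b; rewrite inverted_swap_down => /andP[]. Qed.

Lemma swap_down_neq : swap i j x != x.
Proof.
apply: contraTneq isT => E.
by have := inverted_swap_down (x j) (x i); rewrite E inverted_descent // !eqxx.
Qed.

Lemma swap_down_between y : weak_le (swap i j x) y -> weak_le y x ->
  y = swap i j x \/ y = x.
Proof.
have lt : swap i j x i < swap i j x j by rewrite swap_l swap_r.
by have := @swap_up_between i j (swap i j x) ij lt y; rewrite swapK.
Qed.

Lemma swap_down_ge y : weak_le y x -> ~~ inverted y (x j) (x i) -> weak_le y (swap i j x).
Proof.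
move=> /weak_leP yx nyji; apply/weak_leP => a b yab; rewrite inverted_swap_down yx //=.
by apply: contraNN nyji => /andP[/eqP<- /eqP<-].
Qed.

Lemma join_swap_down y : weak_le y x -> inverted y (x j) (x i) ->
  is_join y (swap i j x) x.
Proof.
move=> yx yji; apply/and3P; split=> //; first exact: swap_down_le.
apply/forallP => w; apply/implyP => /andP[/weak_leP yw /weak_leP x'w].
apply/weak_leP => a b xab.
case: (boolP ((a == x j) && (b == x i))) => [/andP[/eqP-> /eqP->]|nab].
  exact: yw.
by apply: x'w; rewrite inverted_swap_down xab.
Qed.

End Descent.

Lemma is_meet_swaps_up x k1 l1 k2 l2 : val l1 = k1.+1 -> val l2 = k2.+1 ->
  x k1 < x l1 -> x k2 < x l2 -> k1 != k2 ->
  is_meet (swap k1 l1 x) (swap k2 l2 x) x.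
Proof.
move=> kl1 kl2 lt1 lt2 k12; apply: meet_swap_up => //; first exact: swap_up_ge.
rewrite inverted_swap_up // inverted_ascent //=.
by rewrite (inj_eq perm_inj) eq_sym (negbTE k12).
Qed.

Lemma is_join_swaps_down x k1 l1 k2 l2 : val l1 = k1.+1 -> val l2 = k2.+1 ->
  x l1 < x k1 -> x l2 < x k2 -> k1 != k2 ->
  is_join (swap k1 l1 x) (swap k2 l2 x) x.
Proof.
move=> kl1 kl2 lt1 lt2 k12; apply: join_swap_down => //; first exact: swap_down_le.
rewrite inverted_swap_down // inverted_descent //= !(inj_eq perm_inj).
by rewrite [k2 == k1]eq_sym (negbTE k12) andbF.
Qed.

Lemma weak_lt_ascent x y : weak_le x y -> x != y ->
  exists i j, [/\ val j = i.+1, x i < x j & inverted y (x i) (x j)].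
Proof.
move=> /weak_leP xy /eqP nxy.
have [/existsP[i /existsP[j /and3P[/eqP ij lt yij]]]|noasc] :=
  boolP [exists i : 'I_n, exists j : 'I_n,
           [&& val j == i.+1, x i < x j & inverted y (x i) (x j)]].
  by exists i, j.
case: nxy; apply: perm_adjacent_eq => i j ij; have nij := adjacent_neq x ij.
case: (ltngtP (x i) (x j)) => [lt|gt|/val_inj E]; last by rewrite E eqxx in nij.
- rewrite before_inverted // lt; apply: contra noasc => yij.
  by apply/existsP; exists i; apply/existsP; exists j; rewrite ij eqxx lt.
- by have /xy /andP[] : inverted x (x j) (x i) by rewrite inverted_descent.
Qed.

Lemma weak_lt_descent x y : weak_le x y -> x != y ->
  exists i j, [/\ val j = i.+1, y j < y i & ~~ inverted x (y j) (y i)].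
Proof.
move=> /weak_leP xy /eqP nxy.
have [/existsP[i /existsP[j /and3P[/eqP ij lt xji]]]|nodesc] :=
  boolP [exists i : 'I_n, exists j : 'I_n,
           [&& val j == i.+1, y j < y i & ~~ inverted x (y j) (y i)]].
  by exists i, j.
case: nxy; apply/esym/perm_adjacent_eq => i j ij; have nij := adjacent_neq y ij.
case: (ltngtP (y i) (y j)) => [lt|gt|/val_inj E]; last by rewrite E eqxx in nij.
- by rewrite before_inverted // lt; apply/negP => /xy; rewrite inverted_ascent.
- rewrite before_inverted // ltnNge (ltnW gt) /=; apply: contraR nodesc => xji.
  by apply/existsP; exists i; apply/existsP; exists j; rewrite ij eqxx gt.
Qed.

End Swaps.

Section Crossings.
Variable n : nat.
Implicit Types x y : 'S_n.
Implicit Types (S : {set 'I_n}) (a b i j u v : 'I_n).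

Lemma split_consecutive S : S != set0 -> S != setT ->
  exists a b, val b = a.+1 /\ (a \in S) != (b \in S).
Proof.
move=> /set0Pn[s sS] /eqP nST.
have [/existsP[a /existsP[b /andP[/eqP ab Sab]]]|nosplit] :=
  boolP [exists a : 'I_n, exists b : 'I_n, (val b == a.+1) && ((a \in S) != (b \in S))].
  by exists a, b.
have n0 : 0 < n by apply: leq_ltn_trans (ltn_ord s).
have allS k a : a = k :> nat -> (a \in S) = (Ordinal n0 \in S).
  elim: k a => [|k IH] a ak; first by congr (_ \in S); apply: val_inj.
  have kn : k < n by have := ltn_ord a; lia.
  rewrite -(IH (Ordinal kn)) //; apply/eqP; apply: contraNT nosplit => Sk.
  by apply/existsP; exists (Ordinal kn); apply/existsP; exists a; rewrite /= ak eqxx eq_sym.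
by case: nST; apply/setP => a; rewrite inE (allS _ a erefl) -(allS _ s erefl) sS.
Qed.

Lemma adjacent_crossing x S u v : u \notin S -> v \in S -> before x u v ->
  exists i j, [/\ val j = i.+1, x i \notin S & x j \in S].
Proof.
move=> uS vS uv; set K := [set k : 'I_n | (x k \notin S) && (k < pos x v)].
have uK : (x^-1)%g u \in K by rewrite inE permKV uS.
have [k kK kmax] := @arg_maxnP _ _ (fun k => k \in K) val uK.
move: kK; rewrite inE => /andP[xkS kv].
have kn : k.+1 < n by apply: leq_ltn_trans kv (ltn_ord _).
exists k, (Ordinal kn); split=> //; apply/negPn/negP => xk1S.
case: (ltngtP k.+1 (pos x v)) => [lt|gt|E].
- have : Ordinal kn \in K by rewrite inE xk1S lt.
  by move/kmax; rewrite /= ltnn.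
- by move: gt; rewrite ltnNge kv.
- have /val_inj E' : Ordinal kn = (x^-1)%g v :> nat by [].
  by move: xk1S; rewrite E' permKV vS.
Qed.

Definition crossings S x :=
  #|[set uv : 'I_n * 'I_n | [&& uv.1 \notin S, uv.2 \in S & before x uv.1 uv.2]]|.

Lemma crossings_swap_lt S x i j : val j = i.+1 -> x i \notin S -> x j \in S ->
  crossings S (swap i j x) < crossings S x.
Proof.
move=> ij xiS xjS; apply: proper_card; apply/properP; split.
  apply/subsetP => -[u v]; rewrite !inE /= => /and3P[uS vS uv].
  rewrite uS vS -(before_swap_other ij) //.
    by case=> Eu Ev; move: uv; rewrite Eu Ev (before_asym (before_swap x ij)).
  by case=> Eu _; move: uS; rewrite Eu xjS.
exists (x i, x j); rewrite !inE /= xiS xjS ?before_adjacent //.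
by rewrite (before_asym (before_swap x ij)).
Qed.

Lemma sorted_before x S u v :
  (forall u v, u \notin S -> v \in S -> before x u v = false) ->
  u \in S -> v \notin S -> before x u v.
Proof.
move=> sorted uS vS; have uv : u != v by apply: contraNneq vS => <-.
by have := before_total x uv; rewrite (sorted v u) ?orbF.
Qed.

End Crossings.

Section CutEdges.
Variables (V E : finType) (D : {set E}) (f g : E -> V).
Hypothesis cutD : forall S : {set V}, S != set0 -> S != setT ->
  exists2 e, e \in D & (f e \in S) != (g e \in S).

(* a tree grown from one vertex, one crossing edge at a time *)
Lemma tree_growth k : k < #|V| -> exists (S : {set V}) (F : {set E}),
  [/\ #|S| = k.+1, F \subset D, #|F| = k &
      forall e, e \in F -> (f e \in S) && (g e \in S)].
Proof.
elim: k => [|k IH] ltk.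
  have [v _] := card_gt0P ltk.
  by exists [set v], set0; rewrite cards1 sub0set cards0; split=> // e; rewrite in_set0.
have [S [F [cardS FD cardF FS]]] := IH (ltnW ltk).
have S0 : S != set0 by rewrite -card_gt0 cardS.
have ST : S != setT by apply: contraTneq ltk => ST; rewrite -cardsT -ST cardS ltnn.
have [e eD cross] := cutD S0 ST.
have [w wS efg] : exists2 w, w \notin S & (f e \in w |: S) && (g e \in w |: S).
  case fS: (f e \in S) cross; case gS: (g e \in S) => // _.
    by exists (g e); rewrite ?gS // !inE eqxx fS orbT.
  by exists (f e); rewrite ?fS // !inE eqxx gS orbT.
have eF : e \notin F by apply: contra cross => /FS /andP[-> ->].
exists (w |: S), (e |: F); rewrite cardsU1 wS cardS cardsU1 eF cardF subUset sub1set eD FD.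
split=> // e'; rewrite in_setU1 => /orP[/eqP-> //|/FS /andP[fS gS]].
by rewrite !in_setU1 fS gS !orbT.
Qed.

(* a graph all of whose cuts are crossed is connected, so has #|V| - 1 edges *)
Lemma card_le_cut_edges : #|V| <= #|D|.+1.
Proof.
case: (posnP #|V|) => [-> //|V0].
have [|S [F [_ FD cardF _]]] := @tree_growth #|V|.-1; first by rewrite ltn_predL.
by rewrite -(prednK V0) ltnS -cardF subset_leq_card.
Qed.

End CutEdges.

Section Congruence.
Variable n : nat.
Implicit Types x y z : 'S_n.
Implicit Types X Y Z : {set 'S_n}.
Implicit Types (S : {set 'I_n}) (a b i j k l u v : 'I_n).

Definition inv_count x := #|inv_set x|.

Lemma inv_count_eq x y : weak_le x y -> inv_count y <= inv_count x -> x = y.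
Proof.
move=> xy yx; have E : inv_set x = inv_set y by apply/eqP; rewrite eqEcard; apply/andP.
by apply: inverted_inj => a b; rewrite -!in_inv_set E.
Qed.

Lemma inv_count_lt x y : weak_le x y -> x != y -> inv_count x < inv_count y.
Proof. by move=> xy; apply: contraNT; rewrite -leqNgt => /(inv_count_eq xy) ->. Qed.

Lemma is_join_ge x y : weak_le x y -> is_join x y y.
Proof.
by move=> xy; apply/and3P; split; rewrite ?weak_le_refl //; apply/'forall_implyP => w /andP[].
Qed.

Lemma is_join_geC x y : weak_le x y -> is_join y x y.
Proof.
by move=> xy; apply/and3P; split; rewrite ?weak_le_refl //; apply/'forall_implyP => w /andP[].
Qed.

Lemma is_meet_le x y : weak_le x y -> is_meet x y x.
Proof.
by move=> xy; apply/and3P; split; rewrite ?weak_le_refl //; apply/'forall_implyP => w /andP[].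
Qed.

Lemma is_meet_leC x y : weak_le x y -> is_meet y x x.
Proof.
by move=> xy; apply/and3P; split; rewrite ?weak_le_refl //; apply/'forall_implyP => w /andP[].
Qed.

Lemma perm_join_ubl x y : weak_le x (perm_join x y).
Proof. by case/and3P: (perm_joinP x y). Qed.

Lemma perm_join_ubr x y : weak_le y (perm_join x y).
Proof. by case/and3P: (perm_joinP x y). Qed.

Lemma perm_join_lub x y z : weak_le x z -> weak_le y z -> weak_le (perm_join x y) z.
Proof.
by move=> xz yz; case/and3P: (perm_joinP x y) => _ _ /forallP/(_ z); rewrite xz yz.
Qed.

Lemma perm_meet_lbr x y : weak_le (perm_meet x y) y.
Proof. by case/and3P: (perm_meetP x y). Qed.

Lemma perm_meet_lbl x y : weak_le (perm_meet x y) x.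
Proof. by case/and3P: (perm_meetP x y). Qed.

Variable R : rel 'S_n.
Hypothesis congR : lattice_congruence R.

Lemma cong_refl x : R x x.
Proof. by case: congR. Qed.

Lemma cong_sym x y : R x y -> R y x.
Proof. by case: congR => _ sym _ _ _; rewrite sym. Qed.

Lemma cong_trans x y z : R x y -> R y z -> R x z.
Proof. by case: congR => _ _ tr _ _; exact: tr. Qed.

Lemma cong_join x x' y y' z z' :
  R x x' -> R y y' -> is_join x y z -> is_join x' y' z' -> R z z'.
Proof. by case: congR => _ _ _ join _; exact: join. Qed.

Lemma cong_meet x x' y y' z z' :
  R x x' -> R y y' -> is_meet x y z -> is_meet x' y' z' -> R z z'.
Proof. by case: congR => _ _ _ _ meet; exact: meet. Qed.

Lemma cong_convex x y z : weak_le x y -> weak_le y z -> R x z -> R x y.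
Proof.
move=> xy yz xz; apply: cong_sym.
exact: cong_meet (cong_refl y) (cong_sym xz) (is_meet_le yz) (is_meet_leC xy).
Qed.

Lemma mem_cls p x : (x \in cls R p) = R p x.
Proof. by rewrite inE. Qed.

Lemma cls_refl p : p \in cls R p.
Proof. by rewrite mem_cls cong_refl. Qed.

Lemma cls_is_class p : is_class R (cls R p).
Proof. by apply/existsP; exists p. Qed.

Lemma cls_eq p q : R p q -> cls R p = cls R q.
Proof.
move=> pq; apply/setP => x; rewrite !mem_cls.
by apply/idP/idP => [/(cong_trans (cong_sym pq))|/(cong_trans pq)].
Qed.

Lemma cls_eq_cong x y : cls R x = cls R y -> R x y.
Proof. by move=> E; rewrite -mem_cls E cls_refl. Qed.

Lemma classE X y : is_class R X -> y \in X -> X = cls R y.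
Proof. by case/existsP => p /eqP ->; rewrite mem_cls => /cls_eq. Qed.

Lemma class_eq X Y y : is_class R X -> is_class R Y -> y \in X -> y \in Y -> X = Y.
Proof. by move=> hX hY yX yY; rewrite (classE hX yX) (classE hY yY). Qed.

(* the element of a class with most (fewest) inversions is its greatest
   (least) element *)
Lemma class_max p : exists M, R p M /\ forall x, R p x -> weak_le x M.
Proof.
have [M pM Mmax] := @arg_maxnP _ p (R p) inv_count (cong_refl p).
exists M; split=> // x px.
have MxM : R M (perm_join x M).
  apply: cong_join (cong_trans (cong_sym pM) px) (cong_refl M) _ (perm_joinP x M).
  exact: is_join_ge (weak_le_refl M).
have := inv_count_eq (perm_join_ubr x M) (Mmax _ (cong_trans pM MxM)).
by move->; exact: perm_join_ubl.
Qed.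

Lemma class_min p : exists m, R p m /\ forall x, R p x -> weak_le m x.
Proof.
have [m pm mmin] := @arg_minnP _ p (R p) inv_count (cong_refl p).
exists m; split=> // x px.
have mxm : R m (perm_meet x m).
  apply: cong_meet (cong_trans (cong_sym pm) px) (cong_refl m) _ (perm_meetP x m).
  exact: is_meet_le (weak_le_refl m).
have := inv_count_eq (perm_meet_lbr x m) (mmin _ (cong_trans pm mxm)).
by move<-; exact: perm_meet_lbl.
Qed.

Lemma q_leP X Y :
  reflect (exists x y, [/\ x \in X, y \in Y & weak_le x y]) (q_le X Y).
Proof.
apply: (iffP existsP) => [[x /andP[xX /existsP[y /andP[yY xy]]]]|[x [y [xX yY xy]]]].
  by exists x, y.
by exists x; rewrite xX; apply/existsP; exists y; rewrite yY.
Qed.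

(* the witness is (z /\ hi) \/ lo, for any z \in Z below the class of hi *)
Lemma class_between lo hi Z : weak_le lo hi -> is_class R Z ->
  q_le (cls R lo) Z -> q_le Z (cls R hi) ->
  exists2 w, w \in Z & weak_le lo w && weak_le w hi.
Proof.
move=> lohi hZ /q_leP[y1 [z1 [y1lo z1Z y1z1]]] /q_leP[z2 [x2 [z2Z x2hi z2x2]]].
move: y1lo x2hi; rewrite !mem_cls => y1lo x2hi.
rewrite (classE hZ z2Z) mem_cls in z1Z *.
have z2a : R z2 (perm_meet z2 hi).
  exact: cong_meet (cong_refl z2) (cong_sym x2hi) (is_meet_le z2x2) (perm_meetP z2 hi).
have z1b : R z1 (perm_join z1 lo).
  exact: cong_join (cong_refl z1) (cong_sym y1lo) (is_join_geC y1z1) (perm_joinP z1 lo).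
have ab : R (perm_meet z2 hi) (perm_join z1 lo).
  exact: cong_trans (cong_trans (cong_sym z2a) z1Z) z1b.
exists (perm_join (perm_meet z2 hi) lo); last first.
  by rewrite perm_join_ubr perm_join_lub // perm_meet_lbr.
rewrite mem_cls; apply: cong_trans z2a (cong_trans ab (cong_sym _)).
exact: cong_join ab (cong_refl lo) (perm_joinP _ lo) (is_join_geC (perm_join_ubr z1 lo)).
Qed.

Lemma weak_cover_q_cover lo hi : weak_le lo hi ->
  (forall w, weak_le lo w -> weak_le w hi -> w = lo \/ w = hi) ->
  ~~ R lo hi -> q_cover R (cls R lo) (cls R hi).
Proof.
move=> lohi cover nR; apply/andP; split.
  apply/andP; split; last by apply/q_leP; exists lo, hi; rewrite !cls_refl.
  by apply: contraNneq nR => E; rewrite -mem_cls E cls_refl.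
apply/existsP => -[Z /and3P[hZ /andP[loZ lZ] /andP[Zhi Zh]]].
have [w wZ /andP[low whi]] := class_between lohi hZ lZ Zh.
have [E|E] := cover w low whi; rewrite -{}E in loZ Zhi.
  by rewrite (class_eq (cls_is_class _) hZ (cls_refl w) wZ) eqxx in loZ.
by rewrite (class_eq hZ (cls_is_class _) wZ (cls_refl w)) eqxx in Zhi.
Qed.

Hypothesis essR : essential R.

Lemma essential_swap x k l : val l = k.+1 -> val (x l) = (x k).+1 ->
  ~~ R x (swap k l x).
Proof.
move=> kl xkl; apply/negP => Rx; apply: (essR xkl); exists x, (swap k l x).
split=> //; exists k, l; split=> // [q|c /andP[xkc cxl]]; first exact: swapE.
by rewrite xkl ltnS leqNgt xkc in cxl.
Qed.

Section Class.
Variables p M m : 'S_n.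
Hypotheses (pM : R p M) (Mmax : forall y, R p y -> weak_le y M).
Hypotheses (pm : R p m) (mmin : forall y, R p y -> weak_le m y).

Lemma swap_ascent_max_out k l : val l = k.+1 -> M k < M l -> ~~ R p (swap k l M).
Proof.
move=> kl lt; apply/negP => /Mmax/(weak_le_anti (swap_up_ge kl lt))/eqP.
by apply/negP; exact: swap_up_neq.
Qed.

Lemma swap_descent_min_out k l : val l = k.+1 -> m l < m k -> ~~ R p (swap k l m).
Proof.
move=> kl lt; apply/negP => /mmin/(weak_le_anti (swap_down_le kl lt))/eqP.
by apply/negP; exact: swap_down_neq.
Qed.

Lemma transfer_ascent x i j : R p x -> val j = i.+1 -> x i < x j ->
  ~~ R p (swap i j x) -> exists k l, [/\ val l = k.+1, M k = x i & M l = x j].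
Proof.
move=> px ij lt out.
have xx' : weak_le x (swap i j x) := swap_up_ge ij lt.
have xM := Mmax px; have xRM : R x M := cong_trans (cong_sym px) pM.
have nMij : ~~ inverted M (x i) (x j).
  apply: contra out => Mij; apply: (cong_trans px).
  exact: (cong_convex xx' (swap_up_le ij lt xM Mij) xRM).
set top := perm_join M (swap i j x).
have x'top : R (swap i j x) top.
  exact: (cong_join xRM (cong_refl (swap i j x)) (is_join_ge xx')
    (perm_joinP M (swap i j x))).
have Mtop := perm_join_ubl M (swap i j x).
have topij : inverted top (x i) (x j).
  have /weak_leP := perm_join_ubr M (swap i j x); apply.
  by rewrite inverted_swap_up // !eqxx orbT.
have [|k [l [kl Mkl topkl]]] := weak_lt_ascent Mtop.
  by apply: contraNneq nMij => ->.
case: (boolP ((x i == M k) && (x j == M l))) => [/andP[/eqP-> /eqP->]|nkl].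
  by exists k, l.
set y := swap k l M.
have nyij : ~~ inverted y (x i) (x j) by rewrite inverted_swap_up // (negbTE nMij).
have ytop : weak_le y top := swap_up_le kl Mkl Mtop topkl.
have yx : R y x.
  apply: (cong_meet (cong_refl y) (cong_sym x'top) (is_meet_le ytop)).
  exact: (meet_swap_up ij lt (weak_le_trans xM (swap_up_ge kl Mkl)) nyij).
by case/negP: (swap_ascent_max_out kl Mkl); apply: (cong_trans px (cong_sym yx)).
Qed.

Lemma transfer_descent x i j : R p x -> val j = i.+1 -> x j < x i ->
  ~~ R p (swap i j x) -> exists k l, [/\ val l = k.+1, m k = x i & m l = x j].
Proof.
move=> px ij lt out.
have x'x : weak_le (swap i j x) x := swap_down_le ij lt.
have mx := mmin px; have mRx : R m x := cong_trans (cong_sym pm) px.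
have mji : inverted m (x j) (x i).
  apply: contraNT out => nmji; apply: (cong_trans pm).
  exact: (cong_convex (swap_down_ge ij lt mx nmji) x'x mRx).
set bot := perm_meet m (swap i j x).
have x'bot : R (swap i j x) bot.
  exact: (cong_meet (cong_sym mRx) (cong_refl (swap i j x)) (is_meet_leC x'x)
    (perm_meetP m (swap i j x))).
have botm := perm_meet_lbl m (swap i j x).
have nbotji : ~~ inverted bot (x j) (x i).
  apply/negP => botji; have /weak_leP/(_ _ _ botji) := perm_meet_lbr m (swap i j x).
  by rewrite inverted_swap_down // !eqxx andbF.
have [|k [l [kl mlk nbotlk]]] := weak_lt_descent botm.
  by apply: contraNneq nbotji => E; rewrite /bot E.
case: (boolP ((x j == m l) && (x i == m k))) => [/andP[/eqP-> /eqP->]|nlk].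
  by exists k, l.
set y := swap k l m.
have yji : inverted y (x j) (x i) by rewrite inverted_swap_down // mji nlk.
have boty : weak_le bot y := swap_down_ge kl mlk botm nbotlk.
have yx : R y x.
  apply: (cong_join (cong_refl y) (cong_sym x'bot) (is_join_geC boty)).
  exact: (join_swap_down ij lt (weak_le_trans (swap_down_le kl mlk) mx) yji).
by case/negP: (swap_descent_min_out kl mlk); apply: (cong_trans px (cong_sym yx)).
Qed.

(* Otherwise an element w of the class maximal among those not inverting
   (a, a+1) has a cover in the class, which must swap exactly a and a+1. *)
Lemma inverted_consecutive_class a b x : val b = a.+1 -> R p x ->
  inverted x a b = inverted M a b.
Proof.
move=> ab px; apply/idP/idP => [|Mab]; first by move: (Mmax px) => /weak_leP; apply.
apply: contraT => nxab.
have [w /andP[pw nwab] wmax] := @arg_maxnP _ x (fun w => R p w && ~~ inverted w a b)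
  inv_count (introT andP (conj px nxab)).
have wM := Mmax pw.
have [|k [l [kl wkl Mkl]]] := weak_lt_ascent wM; first by apply: contraNneq nwab => ->.
have wy : R w (swap k l w).
  exact: (cong_convex (swap_up_ge kl wkl) (swap_up_le kl wkl wM Mkl)
    (cong_trans (cong_sym pw) pM)).
case: (boolP ((a == w k) && (b == w l))) => [/andP[/eqP Ea /eqP Eb]|nkl].
  by have := essential_swap (x := w) kl; rewrite -Ea -Eb wy => /(_ ab).
have := wmax (swap k l w); rewrite (cong_trans pw wy).
rewrite inverted_swap_up // (negbTE nwab) (negbTE nkl) => /(_ isT) /=.
by rewrite leqNgt (inv_count_lt (swap_up_ge kl wkl) (swap_up_neq kl wkl)).
Qed.

(* (true, (k, k+1)) encodes the ascent k of M, (false, (k, k+1)) the descent k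
   of m; the edge joins the two values exchanged by the swap. *)
Definition class_edges : {set bool * ('I_n * 'I_n)} :=
  [set e | (val e.2.2 == (val e.2.1).+1) &&
           (if e.1 then M e.2.1 < M e.2.2 else m e.2.2 < m e.2.1)].
Definition edge_perm (e : bool * ('I_n * 'I_n)) := if e.1 then M else m.
Definition edge_src e := edge_perm e e.2.1.
Definition edge_tgt e := edge_perm e e.2.2.
Definition edge_class e := cls R (swap e.2.1 e.2.2 (edge_perm e)).

Lemma crossing_swap_edge x S i j : R p x -> val j = i.+1 ->
  (x i \in S) != (x j \in S) -> ~~ R p (swap i j x) ->
  exists2 e, e \in class_edges & (edge_src e \in S) != (edge_tgt e \in S).
Proof.
move=> px ij Sij out; have nij := adjacent_neq x ij.
case: (ltngtP (x i) (x j)) => [lt|gt|/val_inj E]; last by rewrite E eqxx in nij.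
- have [k [l [kl Mk Ml]]] := transfer_ascent px ij lt out.
  exists (true, (k, l)); last by rewrite /edge_src /edge_tgt /= Mk Ml.
  by rewrite inE /= Mk Ml lt -kl eqxx.
- have [k [l [kl mk ml]]] := transfer_descent px ij gt out.
  exists (false, (k, l)); last by rewrite /edge_src /edge_tgt /= mk ml.
  by rewrite inE /= mk ml gt -kl eqxx.
Qed.

Lemma crossing_edge_or_sorted S :
  (exists2 e, e \in class_edges & (edge_src e \in S) != (edge_tgt e \in S)) \/
  exists2 x, R p x & forall u v, u \notin S -> v \in S -> before x u v = false.
Proof.
have [x px xmin] := @arg_minnP _ p (R p) (crossings S) (cong_refl p).
case: (boolP [exists uv : 'I_n * 'I_n,
               [&& uv.1 \notin S, uv.2 \in S & before x uv.1 uv.2]]).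
  case/existsP=> -[u v] /and3P[uS vS xuv]; left.
  have [i [j [ij xiS xjS]]] := adjacent_crossing uS vS xuv.
  apply: (crossing_swap_edge px ij); first by rewrite xjS (negbTE xiS).
  by apply: contraL (crossings_swap_lt ij xiS xjS) => /xmin; rewrite -leqNgt.
rewrite negb_exists => /forallP sorted; right; exists x => // u v uS vS.
by apply/negbTE; have := sorted (u, v); rewrite /= uS vS.
Qed.

Lemma class_edges_cross S : S != set0 -> S != setT ->
  exists2 e, e \in class_edges & (edge_src e \in S) != (edge_tgt e \in S).
Proof.
move=> S0 ST.
have [//|[xm pxm xm_sorted]] := crossing_edge_or_sorted S.
have [[e eE cross]|[xM pxM xM_sorted]] := crossing_edge_or_sorted (~: S).
  exists e => //; move: cross; rewrite !inE.
  by case: (edge_src e \in S); case: (edge_tgt e \in S).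
have [a [b [ab Sab]]] := split_consecutive S0 ST.
have lt_ab : a < b by rewrite ab.
(* xm lists S first and xM lists S last *)
suff : inverted xm a b != inverted xM a b.
  by rewrite (inverted_consecutive_class ab pxm) (inverted_consecutive_class ab pxM) eqxx.
rewrite !invertedE //.
have inS u : (u \in ~: S) = (u \notin S) by rewrite inE.
case: (boolP (a \in S)) Sab => aS /= bS; rewrite ?negbK in bS.
- rewrite (before_asym (sorted_before xm_sorted aS bS)).
  by rewrite (sorted_before xM_sorted) ?inS ?negbK.
- rewrite (sorted_before xm_sorted) //.
  by rewrite (before_asym (sorted_before xM_sorted _ _)) ?inS ?negbK.
Qed.

Lemma edge_class_adj e : e \in class_edges ->
  is_class R (edge_class e) && q_adj R (cls R p) (edge_class e).
Proof.
case: e => -[] [k l]; rewrite inE /edge_class /edge_perm /= => /andP[/eqP kl lt].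
all: rewrite cls_is_class /q_adj /=.
- rewrite (cls_eq pM) (weak_cover_q_cover (swap_up_ge kl lt) (swap_up_between kl lt)) //.
  by apply: contra (swap_ascent_max_out kl lt) => /(cong_trans pM).
- rewrite (cls_eq pm).
  rewrite (weak_cover_q_cover (swap_down_le kl lt) (swap_down_between kl lt)) ?orbT //.
  by apply: contra (swap_descent_min_out kl lt) => /cong_sym/(cong_trans pm).
Qed.

Lemma edge_class_inj : {in class_edges &, injective edge_class}.
Proof.
have mM : weak_le m M := Mmax pm.
have l12 k1 l1 k2 l2 : val l1 = k1.+1 -> val l2 = k2.+1 -> k1 = k2 -> l1 = l2.
  by move=> kl1 kl2 k12; apply: val_inj; rewrite kl1 kl2 k12.
move=> [[] [k1 l1]] [[] [k2 l2]]; rewrite !inE /edge_class /edge_perm /=.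
all: move=> /andP[/eqP kl1 lt1] /andP[/eqP kl2 lt2] /cls_eq_cong R12.
- suff k12 : k1 = k2 by rewrite k12 (l12 _ _ _ _ kl1 kl2 k12).
  apply/eqP; apply: contraNT (swap_ascent_max_out kl2 lt2) => k12.
  apply: (cong_trans pM).
  exact: (cong_meet R12 (cong_refl _) (is_meet_swaps_up kl1 kl2 lt1 lt2 k12)
    (is_meet_le (weak_le_refl _))).
- case/negP: (swap_descent_min_out kl2 lt2); apply: (cong_trans pm (cong_sym _)).
  exact: (cong_convex (swap_down_le kl2 lt2) (weak_le_trans mM (swap_up_ge kl1 lt1))
    (cong_sym R12)).
- case/negP: (swap_descent_min_out kl1 lt1); apply: (cong_trans pm (cong_sym _)).
  exact: (cong_convex (swap_down_le kl1 lt1) (weak_le_trans mM (swap_up_ge kl2 lt2)) R12).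
- suff k12 : k1 = k2 by rewrite k12 (l12 _ _ _ _ kl1 kl2 k12).
  apply/eqP; apply: contraNT (swap_descent_min_out kl2 lt2) => k12.
  apply: (cong_trans pm).
  exact: (cong_join R12 (cong_refl _) (is_join_swaps_down kl1 kl2 lt1 lt2 k12)
    (is_join_ge (weak_le_refl _))).
Qed.

Lemma class_deg_ge : n - 1 <= q_deg R (cls R p).
Proof.
have sub : [set edge_class e | e in class_edges] \subset
    [set Y | is_class R Y && q_adj R (cls R p) Y].
  by apply/subsetP => Y /imsetP[e eE ->]; rewrite inE edge_class_adj.
apply: leq_trans (subset_leq_card sub); rewrite (card_in_imset edge_class_inj).
by rewrite leq_subLR add1n -{1}(card_ord n) (card_le_cut_edges class_edges_cross).
Qed.

End Class.

Local Notation one := (1%g : 'S_n).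

Lemma inverted1 a b : inverted one a b = false.
Proof. by rewrite /inverted /before /pos invg1 !perm1; case: ltngtP. Qed.

Lemma weak_le1 x : weak_le one x.
Proof. by apply/weak_leP => a b; rewrite inverted1. Qed.

Lemma cong1 x : R one x -> x = one.
Proof.
move=> Rx; apply/eqP; apply: contraTT Rx; rewrite eq_sym => nx.
have [i [j [ij lt xij]]] := weak_lt_ascent (weak_le1 x) nx.
apply: contra (essential_swap (x := one) ij _) => [Rx|]; last by rewrite !perm1.
exact: (cong_convex (swap_up_ge ij lt) (swap_up_le ij lt (weak_le1 x) xij) Rx).
Qed.

Definition adjacent_positions : {set 'I_n * 'I_n} := [set ij | val ij.2 == (val ij.1).+1].

Lemma card_adjacent_positions : #|adjacent_positions| <= n - 1.
Proof.
case: (posnP n) => [n0|n0].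
  by apply: leq_trans (subset_leq_card (subsetT _)) _; rewrite cardsT card_prod card_ord n0.
have fst_inj : {in adjacent_positions &, injective (@fst 'I_n 'I_n)}.
  move=> [i1 j1] [i2 j2]; rewrite !inE /= => /eqP ij1 /eqP ij2 i12.
  by congr pair => //; apply: val_inj; rewrite /= ij1 ij2 i12.
rewrite -(card_in_imset fst_inj) subn1 -[n in n.-1](card_ord n).
have last_lt : n.-1 < n by rewrite ltn_predL.
rewrite -(cardsC1 (Ordinal last_lt)); apply/subset_leq_card/subsetP => k.
case/imsetP => -[i j] /[!inE] /eqP /= ij ->; apply/eqP => /(congr1 val) /= E.
by have := ltn_ord j; rewrite ij E prednK // ltnn.
Qed.

(* no class lies below {1}, and a class covering {1} contains some simple
   transposition s_i, hence is the class of s_i *)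
Lemma q_adj_cls1 Y : is_class R Y -> q_adj R (cls R one) Y ->
  exists2 ij, ij \in adjacent_positions & Y = cls R (swap ij.1 ij.2 one).
Proof.
move=> hY; have in_cls1 x : x \in cls R one -> x = one by rewrite mem_cls => /cong1.
case/orP => /andP[/andP[nXY /q_leP[x [y [xX yY xy]]]] nomid]; last first.
  move/in_cls1: yY xy => -> /weak_le_anti/(_ (weak_le1 x)) x1.
  have xX1 : x \in cls R one by rewrite x1 cls_refl.
  by rewrite (class_eq hY (cls_is_class _) xX xX1) eqxx in nXY.
move/in_cls1: xX xy => -> y1.
have ny : one != y by apply: contraNneq nXY => E; rewrite (classE hY yY) E.
have [i [j [ij lt yij]]] := weak_lt_ascent y1 ny.
exists (i, j); first by rewrite inE /= ij.
set s := swap i j one; apply/eqP; apply: contraNT nomid => nYs.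
have s1 : cls R one != cls R s.
  by apply: contra_neq (swap_up_neq ij lt) => /cls_eq_cong/cong1/esym.
apply/existsP; exists (cls R s); rewrite cls_is_class /q_lt s1 eq_sym nYs /=.
by apply/andP; split; apply/q_leP; [exists one, s | exists s, y];
  rewrite ?cls_refl // ?swap_up_ge ?(swap_up_le ij lt y1 yij).
Qed.

Lemma deg_cls1 : q_deg R (cls R one) <= n - 1.
Proof.
apply: leq_trans card_adjacent_positions.
apply: leq_trans (leq_imset_card (fun ij => cls R (swap ij.1 ij.2 one)) _).
apply/subset_leq_card/subsetP => Y; rewrite inE => /andP[hY /(q_adj_cls1 hY)[ij ijA ->]].
exact: imset_f.
Qed.

End Congruence.

Theorem mainTheorem12 (n : nat) (hn : 0 < n) (R : rel 'S_n) :
  lattice_congruence R -> essential R ->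
  (forall X, is_class R X -> n - 1 <= q_deg R X) /\
  (exists X, is_class R X /\ q_deg R X = n - 1).
Proof.
move=> congR essR.
have deg_ge X : is_class R X -> n - 1 <= q_deg R X.
  case/existsP => p /eqP ->.
  have [M [pM Mmax]] := class_max congR p; have [m [pm mmin]] := class_min congR p.
  exact: (class_deg_ge congR essR pM Mmax pm mmin).
split=> //; exists (cls R 1%g); split; first exact: cls_is_class.
by apply/eqP; rewrite eqn_leq deg_cls1 // deg_ge // cls_is_class.
Qed.
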